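(* Let $Q$ be a deterministic query in $\mathcal{L}^{\mathrm{query}}$. Then $\mathcal{R}^{\mathrm{query}}_{\Sigma,\mathcal{D}}(Q)$ is confluent; in particular, for every ground multiset of facts $F$ there is a unique multiset of facts $F'$ such that $\mathrm{Init}_Q(F)\rightarrow^!\mathrm{Ans}(F')$.
   Context: Setting: $\Sigma$ is a signature of facts containing sorts $\mathsf{Fact}$ and $\mathsf{Bool}$, and $\mathcal{D}$ is a $\Sigma$-algebra of facts. Databases are finite multisets of facts (associative-commutative $\circ$ with identity $\emptyset$). Patterns are multisets of facts wrapped by modalities $[\_]_!$ (kept) and $[\_]_?$ (considered at most once per quantifier evaluation, not removed) (plus $[\_]_0$ and fresh-fact modalities not used in queries). Conditions are built from $\mathsf{False}$, $\{B\}$, negation, disjunction and $\exists P.\psi$. Queries of $\mathcal{L}^{\mathrm{query}}$ are built from $\emptyset$, facts, union $Q\oplus Q'$, conditionals $\phi\Rightarrow Q$ and iteration $\mathrm{from}\ P.Q$, where quantification patterns use only $[\_]_!$ and $[\_]_?$ and contain at least one $[\_]_?$ fact. $\mathcal{R}^{\mathrm{query}}_{\Sigma,\mathcal{D}}(Q)$ is the terminating rewriting system evaluating $Q$: it rewrites $\mathrm{Init}_Q(F)=\{F,\emptyset,[\,]_Q\}^q$ (database, partial answer, stack of evaluation frames) to normal forms $\mathrm{Ans}(F')$ whose argument is a query answer; $\mathrm{from}\ P.R$ is evaluated by repeatedly (non-deterministically) matching the pattern facts against an iterator state, removing matched $[\_]_?$ facts, evaluating $R$ under the matching substitution and adding its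 results. A fully reduced term $t:\mathsf{Fact}$ has the unique matching property if for every ground fully reduced $t':\mathsf{Fact}$ there is at most one substitution $\sigma$ with $\sigma(t)=_A t'$ (equality modulo equational attributes). A query is deterministic if all quantification patterns in it (including those inside its conditions) contain only single facts having the unique matching property. *)

From Stdlib Require Import List Permutation Relations.
Import ListNotations.
Set Implicit Arguments.

(* The ambient setting: Sigma-terms modulo the equational attributes A      *)
(* (Leibniz equality on [Tm] IS equality modulo A), with variables,         *)
(* substitution and the full reduction [red] of the algebra of facts D.     *)
Record FactSetting := {
  Var : Type;
  Tm : Type;
  tvar : Var -> Tm;
  subst : (Var -> Tm) -> Tm -> Tm;
  occurs : Var -> Tm -> Prop;
  isFact : Tm -> Prop;
  red : Tm -> Tm;
  ttrue : Tm;
  subst_var : forall s x, subst s (tvar x) = s x;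
  occurs_var : forall x y, occurs y (tvar x) <-> y = x;
  subst_comp : forall s s' t,
      subst s (subst s' t) = subst (fun x => subst s (s' x)) t;
  subst_ext : forall s s' t,
      (forall x, occurs x t -> s x = s' x) -> subst s t = subst s' t;
  occurs_subst : forall s t y,
      occurs y (subst s t) <-> exists x, occurs x t /\ occurs y (s x);
  red_idem : forall t, red (red t) = red t
}.

Arguments tvar {f} x.
Arguments subst {f} s t.
Arguments occurs {f} x t.
Arguments isFact {f} t.
Arguments red {f} t.
Arguments ttrue {f}.

Section Queries.
Context {S : FactSetting}.

Notation Tm := (Tm S).
Notation Var := (Var S).

Definition ground (t : Tm) : Prop := forall x, ~ occurs x t.
Definition fully_reduced (t : Tm) : Prop := red t = t.

(* Databases / answers: finite multisets of facts, as lists up to Permutation *)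
Definition db := list Tm.

(* Modalities usable in query patterns: [_]_! (keep) and [_]_? (once). *)
Inductive modality := MKeep | MOnce.
Definition pattern := list (modality * Tm).

Inductive query :=
| QEmpty
| QFact (t : Tm)
| QUnion (q1 q2 : query)
| QIf (c : cond) (q : query)
| QFrom (P : pattern) (r : query)
with cond :=
| CFalse
| CBool (b : Tm)
| CNot (c : cond)
| COr (c1 c2 : cond)
| CEx (P : pattern) (c : cond).

Definition substP (s : Var -> Tm) (P : pattern) : pattern :=
  map (fun p => (fst p, subst s (snd p))) P.

Fixpoint substQ (s : Var -> Tm) (q : query) : query :=
  match q with
  | QEmpty => QEmpty
  | QFact t => QFact (subst s t)
  | QUnion q1 q2 => QUnion (substQ s q1) (substQ s q2)
  | QIf c q => QIf (substC s c) (substQ s q)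
  | QFrom P r => QFrom (substP s P) (substQ s r)
  end
with substC (s : Var -> Tm) (c : cond) : cond :=
  match c with
  | CFalse => CFalse
  | CBool b => CBool (subst s b)
  | CNot c => CNot (substC s c)
  | COr c1 c2 => COr (substC s c1) (substC s c2)
  | CEx P c => CEx (substP s P) (substC s c)
  end.

Definition qpat_ok (P : pattern) : Prop := exists t, In (MOnce, t) P.

Fixpoint in_Lquery (q : query) : Prop :=
  match q with
  | QEmpty | QFact _ => True
  | QUnion q1 q2 => in_Lquery q1 /\ in_Lquery q2
  | QIf c q => in_Lcond c /\ in_Lquery q
  | QFrom P r => qpat_ok P /\ in_Lquery r
  end
with in_Lcond (c : cond) : Prop :=
  match c with
  | CFalse | CBool _ => True
  | CNot c => in_Lcond c
  | COr c1 c2 => in_Lcond c1 /\ in_Lcond c2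
  | CEx P c => qpat_ok P /\ in_Lcond c
  end.

Definition unique_matching (t : Tm) : Prop :=
  isFact t /\ fully_reduced t /\
  forall t', ground t' -> fully_reduced t' -> isFact t' ->
  forall s1 s2 : Var -> Tm, subst s1 t = t' -> subst s2 t = t' ->
  forall x, occurs x t -> s1 x = s2 x.

Definition det_pattern (P : pattern) : Prop :=
  exists m t, P = [(m, t)] /\ unique_matching t.

Fixpoint deterministic (q : query) : Prop :=
  match q with
  | QEmpty | QFact _ => True
  | QUnion q1 q2 => deterministic q1 /\ deterministic q2
  | QIf c q => deterministic_cond c /\ deterministic q
  | QFrom P r => det_pattern P /\ deterministic r
  end
with deterministic_cond (c : cond) : Prop :=
  match c with
  | CFalse | CBool _ => True
  | CNot c => deterministic_cond c
  | COr c1 c2 => deterministic_cond c1 /\ deterministic_cond c2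
  | CEx P c => det_pattern P /\ deterministic_cond c
  end.

Definition occursP (x : Var) (P : pattern) : Prop :=
  exists p, In p P /\ occurs x (snd p).

Fixpoint kept (P : pattern) (ms : list Tm) : list Tm :=
  match P, ms with
  | (MKeep, _) :: P', u :: ms' => u :: kept P' ms'
  | (MOnce, _) :: P', _ :: ms' => kept P' ms'
  | _, _ => []
  end.

Definition matches (P : pattern) (I : db) (s : Var -> Tm) (I' : db) : Prop :=
  (forall x, ~ occursP x P -> s x = tvar x) /\
  (forall x, occursP x P -> ground (s x)) /\
  exists ms rest, Permutation I (ms ++ rest) /\
    Forall2 (fun p u => subst s (snd p) = u) P ms /\
    I' = kept P ms ++ rest.

(* The rewriting system R^query(Q): states {F, answer, stack}^q and Ans(F')  *)
Inductive frame :=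
| KQ (q : query)
| KIter (P : pattern) (r : query) (I : db)
| KIf (q : query)                         (* awaiting a Boolean for (_ => q) *)
| KC (c : cond)
| KNot
| KOr (c : cond)                          (* awaiting left disjunct *)
| KEx (P : pattern) (c : cond) (I : db)
| KExW (P : pattern) (c : cond) (I : db)  (* awaiting value of an instance *)
| KVal (b : bool).

Inductive state :=
| Run (F : db) (acc : db) (stk : list frame)
| Ans (F' : db).

Definition Init (Q : query) (F : db) : state := Run F [] [KQ Q].

Inductive step : state -> state -> Prop :=
| st_empty F a s : step (Run F a (KQ QEmpty :: s)) (Run F a s)
| st_fact F a s t : step (Run F a (KQ (QFact t) :: s)) (Run F (red t :: a) s)
| st_union F a s q1 q2 :
    step (Run F a (KQ (QUnion q1 q2) :: s)) (Run F a (KQ q1 :: KQ q2 :: s))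
| st_if F a s c q : step (Run F a (KQ (QIf c q) :: s)) (Run F a (KC c :: KIf q :: s))
| st_from F a s P r : step (Run F a (KQ (QFrom P r) :: s)) (Run F a (KIter P r F :: s))
| st_iter F a s P r I sg I' : matches P I sg I' ->
    step (Run F a (KIter P r I :: s)) (Run F a (KQ (substQ sg r) :: KIter P r I' :: s))
| st_iter_end F a s P r I : ~ (exists sg I', matches P I sg I') ->
    step (Run F a (KIter P r I :: s)) (Run F a s)
| st_if_true F a s q : step (Run F a (KVal true :: KIf q :: s)) (Run F a (KQ q :: s))
| st_if_false F a s q : step (Run F a (KVal false :: KIf q :: s)) (Run F a s)
| st_false F a s : step (Run F a (KC CFalse :: s)) (Run F a (KVal false :: s))
| st_bool_true F a s b : red b = ttrue ->
    step (Run F a (KC (CBool b) :: s)) (Run F a (KVal true :: s))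
| st_bool_false F a s b : red b <> ttrue ->
    step (Run F a (KC (CBool b) :: s)) (Run F a (KVal false :: s))
| st_not F a s c : step (Run F a (KC (CNot c) :: s)) (Run F a (KC c :: KNot :: s))
| st_not_val F a s b : step (Run F a (KVal b :: KNot :: s)) (Run F a (KVal (negb b) :: s))
| st_or F a s c1 c2 : step (Run F a (KC (COr c1 c2) :: s)) (Run F a (KC c1 :: KOr c2 :: s))
| st_or_true F a s c : step (Run F a (KVal true :: KOr c :: s)) (Run F a (KVal true :: s))
| st_or_false F a s c : step (Run F a (KVal false :: KOr c :: s)) (Run F a (KC c :: s))
| st_ex F a s P c : step (Run F a (KC (CEx P c) :: s)) (Run F a (KEx P c F :: s))
| st_ex_try F a s P c I sg I' : matches P I sg I' ->
    step (Run F a (KEx P c I :: s)) (Run F a (KC (substC sg c) :: KExW P c I' :: s))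
| st_ex_none F a s P c I : ~ (exists sg I', matches P I sg I') ->
    step (Run F a (KEx P c I :: s)) (Run F a (KVal false :: s))
| st_exw_true F a s P c I :
    step (Run F a (KVal true :: KExW P c I :: s)) (Run F a (KVal true :: s))
| st_exw_false F a s P c I :
    step (Run F a (KVal false :: KExW P c I :: s)) (Run F a (KEx P c I :: s))
| st_done F a : step (Run F a []) (Ans a).

Definition steps : state -> state -> Prop := clos_refl_trans state step.
Definition normal_form (s : state) : Prop := ~ exists t, step s t.
Definition steps_nf (s t : state) : Prop := steps s t /\ normal_form t.

(* Equality of states modulo the associativity/commutativity of multisets *)
Inductive frame_equiv : frame -> frame -> Prop :=
| fe_refl f : frame_equiv f f
| fe_iter P r I I' : Permutation I I' -> frame_equiv (KIter P r I) (KIter P r I')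
| fe_ex P c I I' : Permutation I I' -> frame_equiv (KEx P c I) (KEx P c I')
| fe_exw P c I I' : Permutation I I' -> frame_equiv (KExW P c I) (KExW P c I').

Inductive state_equiv : state -> state -> Prop :=
| se_run F F' a a' s s' : Permutation F F' -> Permutation a a' ->
    Forall2 frame_equiv s s' -> state_equiv (Run F a s) (Run F' a' s')
| se_ans a a' : Permutation a a' -> state_equiv (Ans a) (Ans a').

Definition confluent_from (s : state) : Prop :=
  forall u v, steps s u -> steps s v ->
  exists w1 w2, steps u w1 /\ steps v w2 /\ state_equiv w1 w2.

Definition ground_db (F : db) : Prop :=
  Forall (fun t => ground t /\ fully_reduced t /\ isFact t) F.

End Queries.

(* Every state reachable from Init_Q(F) is given a meaning by a big-step
   evaluation of its stack of frames, and each rewrite step preserves every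
   such meaning up to permutation.  Since the initial state has a meaning and
   every state with a meaning can be run to some Ans(F'), all reachable answers
   coincide with that meaning.  Determinism enters in the iteration frames:
   with a single [_]_? fact having the unique matching property, two different
   matches against an iterator state consume two different facts and hence
   commute, so the big-step result of from P.R, and the truth value of
   exists P.psi, do not depend on which match is taken first. *)
From Pilot Require Import Defs.
From Stdlib Require Import List Permutation Relations Classical FunctionalExtensionality Lia Wf_nat.
Import ListNotations.
Set Implicit Arguments.
Unset Strict Implicit.

Lemma Permutation_cons_diff (A : Type) (I I0 I1 : list A) (u0 u1 : A) :
  Permutation I (u0 :: I0) -> Permutation I (u1 :: I1) -> u0 <> u1 ->
  exists J, Permutation I0 (u1 :: J) /\ Permutation I1 (u0 :: J).
Proof.
  intros H0 H1 Hne.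
  assert (Hin : In u1 (u0 :: I0)).
  { apply (Permutation_in _ H0), (Permutation_in _ (Permutation_sym H1)); left; reflexivity. }
  destruct Hin as [E | Hin]; [congruence |].
  apply in_split in Hin as [l1 [l2 ->]].
  exists (l1 ++ l2); split.
  - apply Permutation_sym, Permutation_middle.
  - apply Permutation_cons_inv with u1.
    rewrite <- H1, H0, <- Permutation_middle.
    apply perm_swap.
Qed.

Section QueryEvaluation.
Context {Sig : FactSetting}.
Notation Tm := (Tm Sig).
Notation Var := (Var Sig).
Notation db := (@db Sig).
Notation query := (@query Sig).
Notation cond := (@cond Sig).
Notation pattern := (@pattern Sig).
Notation state := (@state Sig).

Definition ground_fact (t : Tm) : Prop := ground t /\ fully_reduced t /\ isFact t.

Definition determines_matcher (t : Tm) : Prop :=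
  forall t', ground_fact t' -> forall s1 s2, subst s1 t = t' -> subst s2 t = t' ->
  forall x, occurs x t -> s1 x = s2 x.

Definition single_pattern (P : pattern) : Prop :=
  exists t, P = [(MOnce, t)] /\ determines_matcher t.

(* Unlike [in_Lquery Q /\ deterministic Q], this is stable under the
   substitutions produced by matching: [unique_matching] also asks the pattern
   fact to be fully reduced, which an instance need not be. *)
Fixpoint det_query (q : query) : Prop :=
  match q with
  | QEmpty | QFact _ => True
  | QUnion q1 q2 => det_query q1 /\ det_query q2
  | QIf c q => det_cond c /\ det_query q
  | QFrom P r => single_pattern P /\ det_query r
  end
with det_cond (c : cond) : Prop :=
  match c with
  | CFalse | CBool _ => True
  | CNot c => det_cond c
  | COr c1 c2 => det_cond c1 /\ det_cond c2
  | CEx P c => single_pattern P /\ det_cond c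
  end.

Definition grounding (s : Var -> Tm) : Prop := forall x, ground (s x) \/ s x = tvar x.

Definition no_match (P : pattern) (I : db) : Prop := ~ exists sg I', matches P I sg I'.

Scheme query_mind := Induction for Defs.query Sort Prop
  with cond_mind := Induction for Defs.cond Sort Prop.
Combined Scheme query_cond_mind from query_mind, cond_mind.

Lemma single_pattern_of_deterministic (P : pattern) :
  qpat_ok P -> det_pattern P -> single_pattern P.
Proof.
  intros [t0 Hin] [m [t [-> [_ [_ Hum]]]]].
  exists t; split; [destruct Hin as [E | []]; congruence |].
  intros t' [Hg [Hr Hf]]; exact (Hum t' Hg Hr Hf).
Qed.

Lemma det_of_deterministic :
  (forall q : query, in_Lquery q -> deterministic q -> det_query q) /\
  (forall c : cond, in_Lcond c -> deterministic_cond c -> det_cond c).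
Proof.
  apply query_cond_mind; simpl; intros;
    repeat match goal with H : _ /\ _ |- _ => destruct H end;
    repeat split; auto using single_pattern_of_deterministic.
Qed.

(* A variable of [subst s t] is either inside a ground [s x] (impossible) or
   [x] itself, where [s] is the identity. *)
Lemma determines_matcher_subst t s :
  determines_matcher t -> grounding s -> determines_matcher (subst s t).
Proof.
  intros Hdet Hs t' Ht' s1 s2 E1 E2 y Hy.
  rewrite subst_comp in E1, E2.
  apply occurs_subst in Hy as [x [Hx Hy]].
  pose proof (Hdet t' Ht' _ _ E1 E2 x Hx) as Hagree; simpl in Hagree.
  destruct (Hs x) as [Hg | Hid].
  - destruct (Hg y Hy).
  - rewrite Hid in Hy, Hagree.
    apply occurs_var in Hy; subst y.
    rewrite !subst_var in Hagree; exact Hagree.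
Qed.

Lemma single_pattern_subst P s :
  single_pattern P -> grounding s -> single_pattern (substP s P).
Proof.
  intros [t [-> Hdet]] Hs.
  exists (subst s t); split; [reflexivity | apply determines_matcher_subst; assumption].
Qed.

Lemma det_subst s : grounding s ->
  (forall q, det_query q -> det_query (substQ s q)) /\
  (forall c, det_cond c -> det_cond (substC s c)).
Proof.
  intros Hs; apply query_cond_mind; simpl; intros;
    repeat match goal with H : _ /\ _ |- _ => destruct H end;
    repeat split; auto using single_pattern_subst.
Qed.

Fixpoint qsize (q : query) : nat :=
  match q with
  | QEmpty | QFact _ => 1
  | QUnion q1 q2 => 1 + (qsize q1 + qsize q2)
  | QIf c q => 1 + (csize c + qsize q)
  | QFrom _ r => 1 + qsize r
  end
with csize (c : cond) : nat :=
  match c with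
  | CFalse | CBool _ => 1
  | CNot c => 1 + csize c
  | COr c1 c2 => 1 + (csize c1 + csize c2)
  | CEx _ c => 1 + csize c
  end.

Lemma size_subst s :
  (forall q, qsize (substQ s q) = qsize q) /\ (forall c, csize (substC s c) = csize c).
Proof. apply query_cond_mind; intros; simpl; lia. Qed.

Lemma occursP_single x (t : Tm) : occursP x [(MOnce, t)] <-> occurs x t.
Proof.
  split.
  - intros [p [[<- | []] Hx]]; exact Hx.
  - intros Hx; exists (MOnce, t); split; [left |]; auto.
Qed.

Lemma matches_single (t : Tm) I sg I' :
  matches [(MOnce, t)] I sg I' <->
  (forall x, ~ occurs x t -> sg x = tvar x) /\ (forall x, occurs x t -> ground (sg x)) /\
  Permutation I (subst sg t :: I').
Proof.
  unfold matches; setoid_rewrite occursP_single.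
  split.
  - intros [H1 [H2 [ms [rest [Hp [Hf ->]]]]]].
    inversion Hf as [| p u P0 ms0 Hpu Hrest]; subst.
    inversion Hrest; subst; auto.
  - intros [H1 [H2 Hp]]; repeat split; auto.
    exists [subst sg t], I'; repeat split; auto.
Qed.

Lemma matches_grounding (P : pattern) I sg I' : matches P I sg I' -> grounding sg.
Proof.
  intros [Hout [Hin _]] x.
  destruct (classic (occursP x P)); [left | right]; auto.
Qed.

Lemma matches_perm (P : pattern) I J sg I' :
  matches P I sg I' -> Permutation I J -> matches P J sg I'.
Proof.
  intros [H1 [H2 [ms [rest [Hp Hr]]]]] HJ.
  repeat split; auto.
  exists ms, rest; split; [rewrite <- HJ |]; auto.
Qed.

Lemma no_match_perm (P : pattern) I J : no_match P I -> Permutation I J -> no_match P J.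
Proof.
  intros Hn HJ [sg [I' Hm]].
  apply Hn; exists sg, I'.
  exact (matches_perm Hm (Permutation_sym HJ)).
Qed.

Lemma matches_shrinks (P : pattern) I sg I' :
  single_pattern P -> matches P I sg I' -> length I' < length I.
Proof.
  intros [t [-> _]] Hm.
  apply matches_single in Hm as [_ [_ Hp]].
  apply Permutation_length in Hp; simpl in Hp; lia.
Qed.

Lemma matches_single_ground (t : Tm) I sg I' :
  Forall ground_fact I -> matches [(MOnce, t)] I sg I' ->
  ground_fact (subst sg t) /\ Forall ground_fact I'.
Proof.
  intros HI Hm.
  apply matches_single in Hm as [_ [_ Hp]].
  apply (Permutation_Forall Hp) in HI; inversion HI; auto.
Qed.

Lemma matches_rest_ground (P : pattern) I sg I' :
  single_pattern P -> Forall ground_fact I -> matches P I sg I' -> Forall ground_fact I'.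
Proof. intros [t [-> _]] HI Hm; exact (proj2 (matches_single_ground HI Hm)). Qed.

Lemma matcher_unique (t : Tm) I sg1 sg2 I1 I2 :
  determines_matcher t -> Forall ground_fact I ->
  matches [(MOnce, t)] I sg1 I1 -> matches [(MOnce, t)] I sg2 I2 ->
  subst sg1 t = subst sg2 t -> sg1 = sg2.
Proof.
  intros Hdet HI Hm1 Hm2 E.
  destruct (matches_single_ground HI Hm1) as [Hg _].
  apply matches_single in Hm1 as [Hout1 _], Hm2 as [Hout2 _].
  apply functional_extensionality; intros x.
  destruct (classic (occurs x t)) as [Hx | Hx].
  - exact (Hdet _ Hg sg1 sg2 eq_refl (eq_sym E) x Hx).
  - rewrite Hout1, Hout2; auto.
Qed.

Lemma matches_diamond (P : pattern) I sg0 I0 sg1 I1 :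
  single_pattern P -> Forall ground_fact I -> matches P I sg0 I0 -> matches P I sg1 I1 ->
  (sg0 = sg1 /\ Permutation I0 I1) \/
  exists J, matches P I0 sg1 J /\ matches P I1 sg0 J.
Proof.
  intros HP HI Hm0 Hm1.
  destruct HP as [t [-> Hdet]].
  destruct (classic (subst sg0 t = subst sg1 t)) as [E | NE].
  - left.
    assert (sg0 = sg1) as <- by (eapply matcher_unique; eauto).
    split; auto.
    apply matches_single in Hm0 as [_ [_ P0]], Hm1 as [_ [_ P1]].
    apply Permutation_cons_inv with (subst sg0 t).
    rewrite <- P0; exact P1.
  - right.
    pose proof Hm0 as Hm0'; pose proof Hm1 as Hm1'.
    apply matches_single in Hm0' as [A0 [B0 P0]], Hm1' as [A1 [B1 P1]].
    destruct (Permutation_cons_diff P0 P1 NE) as [J [PJ0 PJ1]].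
    exists J; split; apply matches_single; auto.
Qed.

(* The side conditions of [ei_step],
   [ex_true] and [ex_false] are exactly what the commutation lemmas need; since
   they are part of the derivations, every state with a denotation is well
   formed and no separate invariant of reachable states is required. *)
Inductive evalQ (F : db) : query -> db -> Prop :=
| eq_empty : evalQ F QEmpty []
| eq_fact t : evalQ F (QFact t) [red t]
| eq_union q1 q2 o1 o2 : evalQ F q1 o1 -> evalQ F q2 o2 -> evalQ F (QUnion q1 q2) (o2 ++ o1)
| eq_if_true c q o : evalC F c true -> evalQ F q o -> evalQ F (QIf c q) o
| eq_if_false c q : evalC F c false -> evalQ F (QIf c q) []
| eq_from P r o : evalIt F P r F o -> evalQ F (QFrom P r) o
with evalIt (F : db) : pattern -> query -> db -> db -> Prop :=
| ei_end P r I : no_match P I -> evalIt F P r I []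
| ei_step P r I sg I' o1 o2 : single_pattern P -> Forall ground_fact I ->
    matches P I sg I' -> evalQ F (substQ sg r) o1 -> evalIt F P r I' o2 ->
    evalIt F P r I (o2 ++ o1)
with evalC (F : db) : cond -> bool -> Prop :=
| ec_false : evalC F CFalse false
| ec_bool_true b : red b = ttrue -> evalC F (CBool b) true
| ec_bool_false b : red b <> ttrue -> evalC F (CBool b) false
| ec_not c b : evalC F c b -> evalC F (CNot c) (negb b)
| ec_or_true c1 c2 : evalC F c1 true -> evalC F (COr c1 c2) true
| ec_or_false c1 c2 b : evalC F c1 false -> evalC F c2 b -> evalC F (COr c1 c2) b
| ec_ex P c b : evalEx F P c F b -> evalC F (CEx P c) b
with evalEx (F : db) : pattern -> cond -> db -> bool -> Prop :=
| ex_none P c I : no_match P I -> evalEx F P c I false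
| ex_true P c I sg I' : single_pattern P -> det_cond c -> Forall ground_fact F ->
    Forall ground_fact I ->
    matches P I sg I' -> evalC F (substC sg c) true -> evalEx F P c I true
| ex_false P c I sg I' b : single_pattern P -> det_cond c -> Forall ground_fact F ->
    Forall ground_fact I ->
    matches P I sg I' -> evalC F (substC sg c) false -> evalEx F P c I' b ->
    evalEx F P c I b.

Scheme evalQ_mind := Induction for evalQ Sort Prop
  with evalIt_mind := Induction for evalIt Sort Prop
  with evalC_mind := Induction for evalC Sort Prop
  with evalEx_mind := Induction for evalEx Sort Prop.
Combined Scheme eval_mind from evalQ_mind, evalIt_mind, evalC_mind, evalEx_mind.

Lemma evalIt_total F P r : single_pattern P ->
  (forall sg I I', matches P I sg I' -> exists o, evalQ F (substQ sg r) o) ->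
  forall I, Forall ground_fact I -> exists o, evalIt F P r I o.
Proof.
  intros HP Hbody I.
  induction I as [I IH] using (induction_ltof1 _ (@length _)); intros HI.
  destruct (classic (exists sg I', matches P I sg I')) as [[sg [I' Hm]] | Hn].
  - destruct (Hbody _ _ _ Hm) as [o1 H1].
    destruct (IH I') as [o2 H2];
      [exact (matches_shrinks HP Hm) | exact (matches_rest_ground HP HI Hm) |].
    exists (o2 ++ o1); eapply ei_step; eauto.
  - exists []; apply ei_end; exact Hn.
Qed.

Lemma evalEx_total F P c : single_pattern P -> det_cond c -> Forall ground_fact F ->
  (forall sg I I', matches P I sg I' -> exists b, evalC F (substC sg c) b) ->
  forall I, Forall ground_fact I -> exists b, evalEx F P c I b.
Proof.
  intros HP Hc HF Hbody I.
  induction I as [I IH] using (induction_ltof1 _ (@length _)); intros HI.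
  destruct (classic (exists sg I', matches P I sg I')) as [[sg [I' Hm]] | Hn].
  - destruct (Hbody _ _ _ Hm) as [[|] H0].
    + exists true; eapply ex_true; eauto.
    + destruct (IH I') as [b Hb];
        [exact (matches_shrinks HP Hm) | exact (matches_rest_ground HP HI Hm) |].
      exists b; eapply ex_false; eauto.
  - exists false; apply ex_none; exact Hn.
Qed.

Lemma eval_total_below F n : Forall ground_fact F ->
  (forall q, qsize q < n -> det_query q -> exists o, evalQ F q o) /\
  (forall c, csize c < n -> det_cond c -> exists b, evalC F c b).
Proof.
  intros HF; induction n as [| n [IHq IHc]]; [split; intros; lia |].
  split.
  - intros q Hs Hq; destruct q; simpl in Hs, Hq.
    + exists []; constructor.
    + exists [red t]; constructor.
    + destruct Hq as [Hq1 Hq2].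
      destruct (IHq q1) as [o1 H1]; [lia | exact Hq1 |].
      destruct (IHq q2) as [o2 H2]; [lia | exact Hq2 |].
      exists (o2 ++ o1); constructor; assumption.
    + destruct Hq as [Hc Hq].
      destruct (IHc c) as [[|] H1]; [lia | exact Hc | |].
      * destruct (IHq q) as [o H2]; [lia | exact Hq |].
        exists o; apply eq_if_true; assumption.
      * exists []; apply eq_if_false; assumption.
    + destruct Hq as [HP Hr].
      destruct (evalIt_total (F := F) (r := q) HP) with (I := F) as [o Ho]; [| exact HF |].
      * intros sg I I' Hm; apply IHq.
        -- rewrite (proj1 (size_subst sg)); lia.
        -- exact (proj1 (det_subst (matches_grounding Hm)) q Hr).
      * exists o; constructor; exact Ho.
  - intros c Hs Hc; destruct c; simpl in Hs, Hc.
    + exists false; constructor.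
    + destruct (classic (red b = ttrue));
        [exists true; apply ec_bool_true | exists false; apply ec_bool_false]; assumption.
    + destruct (IHc c) as [b H1]; [lia | exact Hc |].
      exists (negb b); constructor; exact H1.
    + destruct Hc as [Hc1 Hc2].
      destruct (IHc c1) as [[|] H1]; [lia | exact Hc1 | |].
      * exists true; apply ec_or_true; exact H1.
      * destruct (IHc c2) as [b H2]; [lia | exact Hc2 |].
        exists b; apply ec_or_false; assumption.
    + destruct Hc as [HP Hc].
      destruct (evalEx_total HP Hc HF) with (I := F) as [b Hb]; [| exact HF |].
      * intros sg I I' Hm; apply IHc.
        -- rewrite (proj2 (size_subst sg)); lia.
        -- exact (proj2 (det_subst (matches_grounding Hm)) c Hc).
      * exists b; constructor; exact Hb.
Qed.

Lemma evalQ_total F q : Forall ground_fact F -> det_query q -> exists o, evalQ F q o.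
Proof. intros HF; apply (proj1 (eval_total_below (S (qsize q)) HF)); lia. Qed.

Lemma evalC_total F c : Forall ground_fact F -> det_cond c -> exists b, evalC F c b.
Proof. intros HF; apply (proj2 (eval_total_below (S (csize c)) HF)); lia. Qed.

Lemma evalIt_perm F P r I J o :
  evalIt F P r I o -> Permutation I J -> evalIt F P r J o.
Proof.
  intros H HJ; inversion H as [? ? ? Hn | ? ? ? sg I' o1 o2 HP HI Hm Hbody Hrest]; subst.
  - apply ei_end; eauto using no_match_perm.
  - apply (Permutation_Forall HJ) in HI.
    eapply ei_step; eauto using matches_perm.
Qed.

Lemma evalEx_perm F P c I J b :
  evalEx F P c I b -> Permutation I J -> evalEx F P c J b.
Proof.
  intros H HJ;
    inversion H as [? ? ? Hn | ? ? ? sg I' HP Hc HF HI Hm Hbody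
                   | ? ? ? sg I' ? HP Hc HF HI Hm Hbody Hrest]; subst.
  - apply ex_none; eauto using no_match_perm.
  - apply (Permutation_Forall HJ) in HI.
    eapply ex_true; eauto using matches_perm.
  - apply (Permutation_Forall HJ) in HI.
    eapply ex_false; eauto using matches_perm.
Qed.

Lemma evalIt_commute F P r I o : evalIt F P r I o ->
  forall sg I', matches P I sg I' ->
  exists o1 o2, evalQ F (substQ sg r) o1 /\ evalIt F P r I' o2 /\ Permutation o (o2 ++ o1).
Proof.
  induction 1 as [P r I Hn | P r I sg0 I0 o1 o2 HP HI Hm0 Hbody Hrest IH];
    intros sg I' Hm.
  - destruct Hn; eauto.
  - destruct (matches_diamond HP HI Hm0 Hm) as [[<- HI0] | [J [MJ0 MJ1]]].
    + exists o1, o2; split; [| split]; eauto using evalIt_perm.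
    + destruct (IH sg J MJ0) as [p1 [p2 [Q1 [E2 Pp]]]].
      exists p1, (p2 ++ o1); split; [| split]; [assumption | |].
      * pose proof (matches_rest_ground HP HI Hm).
        eapply ei_step; eauto.
      * rewrite Pp, <- !app_assoc; apply Permutation_app_head, Permutation_app_comm.
Qed.

Lemma evalEx_commute F P c I b : evalEx F P c I b ->
  forall sg I', matches P I sg I' ->
  (evalC F (substC sg c) true /\ b = true) \/
  (evalC F (substC sg c) false /\ evalEx F P c I' b).
Proof.
  induction 1 as [P c I Hn | P c I sg0 I0 HP Hc HF HI Hm0 Hbody
                  | P c I sg0 I0 b HP Hc HF HI Hm0 Hbody Hrest IH];
    intros sg I' Hm.
  - destruct Hn; eauto.
  - destruct (matches_diamond HP HI Hm0 Hm) as [[<- _] | [J [MJ0 MJ1]]]; [left; auto |].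
    assert (Hc' : det_cond (substC sg c)) by exact (proj2 (det_subst (matches_grounding Hm)) c Hc).
    destruct (evalC_total HF Hc') as [[|] Hb]; [left; auto | right].
    pose proof (matches_rest_ground HP HI Hm).
    split; [exact Hb |]; eapply ex_true; eauto.
  - destruct (matches_diamond HP HI Hm0 Hm) as [[<- HI0] | [J [MJ0 MJ1]]].
    + right; eauto using evalEx_perm.
    + destruct (IH sg J MJ0) as [[Hb ->] | [Hb HJ]]; [left; auto | right].
      pose proof (matches_rest_ground HP HI Hm).
      split; [exact Hb |]; eapply ex_false; eauto.
Qed.

Lemma steps_step (s1 s2 s3 : state) : step s1 s2 -> steps s2 s3 -> steps s1 s3.
Proof. intros H1 H2; exact (rt_trans _ _ _ _ _ (rt_step _ _ _ _ H1) H2). Qed.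

Lemma eval_steps F :
  (forall q o, evalQ F q o ->
     forall a k, steps (Run F a (KQ q :: k)) (Run F (o ++ a) k)) /\
  (forall P r I o, evalIt F P r I o ->
     forall a k, steps (Run F a (KIter P r I :: k)) (Run F (o ++ a) k)) /\
  (forall c b, evalC F c b ->
     forall a k, steps (Run F a (KC c :: k)) (Run F a (KVal b :: k))) /\
  (forall P c I b, evalEx F P c I b ->
     forall a k, steps (Run F a (KEx P c I :: k)) (Run F a (KVal b :: k))).
Proof.
  apply eval_mind.
  - intros a k; apply rt_step, st_empty.
  - intros t a k; apply rt_step, st_fact.
  - intros q1 q2 o1 o2 _ IH1 _ IH2 a k.
    eapply steps_step; [apply st_union |].
    eapply rt_trans; [apply IH1 |]. rewrite <- app_assoc; apply IH2.
  - intros c q o _ IHc _ IHq a k.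
    eapply steps_step; [apply st_if |].
    eapply rt_trans; [apply IHc |]. eapply steps_step; [apply st_if_true | apply IHq].
  - intros c q _ IHc a k.
    eapply steps_step; [apply st_if |].
    eapply rt_trans; [apply IHc |]. apply rt_step, st_if_false.
  - intros P r o _ IH a k; eapply steps_step; [apply st_from | apply IH].
  - intros P r I Hn a k; apply rt_step, st_iter_end, Hn.
  - intros P r I sg I' o1 o2 _ _ Hm _ IH1 _ IH2 a k.
    eapply steps_step; [apply st_iter, Hm |].
    eapply rt_trans; [apply IH1 |]. rewrite <- app_assoc; apply IH2.
  - intros a k; apply rt_step, st_false.
  - intros b Hb a k; apply rt_step, st_bool_true, Hb.
  - intros b Hb a k; apply rt_step, st_bool_false, Hb.
  - intros c b _ IH a k.
    eapply steps_step; [apply st_not |].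
    eapply rt_trans; [apply IH |]. apply rt_step, st_not_val.
  - intros c1 c2 _ IH a k.
    eapply steps_step; [apply st_or |].
    eapply rt_trans; [apply IH |]. apply rt_step, st_or_true.
  - intros c1 c2 b _ IH1 _ IH2 a k.
    eapply steps_step; [apply st_or |].
    eapply rt_trans; [apply IH1 |]. eapply steps_step; [apply st_or_false | apply IH2].
  - intros P c b _ IH a k; eapply steps_step; [apply st_ex | apply IH].
  - intros P c I Hn a k; apply rt_step, st_ex_none, Hn.
  - intros P c I sg I' _ _ _ _ Hm _ IH a k.
    eapply steps_step; [apply st_ex_try, Hm |].
    eapply rt_trans; [apply IH |]. apply rt_step, st_exw_true.
  - intros P c I sg I' b _ _ _ _ Hm _ IHc _ IHex a k.
    eapply steps_step; [apply st_ex_try, Hm |].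
    eapply rt_trans; [apply IHc |]. eapply steps_step; [apply st_exw_false | apply IHex].
Qed.

(* [evalS F k o]: running the stack [k] adds [o] to the answer; [evalK F b k o]:
   the same once a condition has produced [b] on top of [k]. *)
Inductive evalS (F : db) : list (@frame Sig) -> db -> Prop :=
| es_nil : evalS F [] []
| es_query q k o1 o2 : evalQ F q o1 -> evalS F k o2 -> evalS F (KQ q :: k) (o2 ++ o1)
| es_iter P r I k o1 o2 :
    evalIt F P r I o1 -> evalS F k o2 -> evalS F (KIter P r I :: k) (o2 ++ o1)
| es_cond c b k o : evalC F c b -> evalK F b k o -> evalS F (KC c :: k) o
| es_ex P c I b k o : evalEx F P c I b -> evalK F b k o -> evalS F (KEx P c I :: k) o
| es_val b k o : evalK F b k o -> evalS F (KVal b :: k) o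
with evalK (F : db) : bool -> list (@frame Sig) -> db -> Prop :=
| ek_if_true q k o : evalS F (KQ q :: k) o -> evalK F true (KIf q :: k) o
| ek_if_false q k o : evalS F k o -> evalK F false (KIf q :: k) o
| ek_not b k o : evalK F (negb b) k o -> evalK F b (KNot :: k) o
| ek_or_true c k o : evalK F true k o -> evalK F true (KOr c :: k) o
| ek_or_false c k o : evalS F (KC c :: k) o -> evalK F false (KOr c :: k) o
| ek_exw_true P c I k o : evalK F true k o -> evalK F true (KExW P c I :: k) o
| ek_exw_false P c I k o : evalS F (KEx P c I :: k) o -> evalK F false (KExW P c I :: k) o.

Scheme evalS_mind := Induction for evalS Sort Prop
  with evalK_mind := Induction for evalK Sort Prop.
Combined Scheme evalSK_mind from evalS_mind, evalK_mind.

Lemma evalS_steps F :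
  (forall k o, evalS F k o -> forall a, steps (Run F a k) (Ans (o ++ a))) /\
  (forall b k o, evalK F b k o -> forall a, steps (Run F a (KVal b :: k)) (Ans (o ++ a))).
Proof.
  destruct (eval_steps F) as [HQ [HIt [HC HEx]]].
  apply evalSK_mind;
    try solve [intros until 1; intros IH a; eapply steps_step; [constructor | apply IH]].
  - intros a; apply rt_step; constructor.
  - intros q k o1 o2 Hq _ IH a.
    eapply rt_trans; [exact (HQ _ _ Hq a k) |].
    rewrite <- app_assoc; apply IH.
  - intros P r I k o1 o2 HI _ IH a.
    eapply rt_trans; [exact (HIt _ _ _ _ HI a k) |].
    rewrite <- app_assoc; apply IH.
  - intros c b k o Hc _ IH a; exact (rt_trans _ _ _ _ _ (HC _ _ Hc a k) (IH a)).
  - intros P c I b k o Hb _ IH a; exact (rt_trans _ _ _ _ _ (HEx _ _ _ _ Hb a k) (IH a)).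
  - intros b k o _ IH; exact IH.
Qed.

Definition denotes (s : state) (z : db) : Prop :=
  match s with
  | Run F a k => exists o, evalS F k o /\ Permutation z (o ++ a)
  | Ans a => Permutation z a
  end.

Lemma evalS_iter_match F P r I sg I' k o :
  matches P I sg I' -> evalS F (KIter P r I :: k) o ->
  exists o', evalS F (KQ (substQ sg r) :: KIter P r I' :: k) o' /\ Permutation o o'.
Proof.
  intros Hm He; inversion He as [| | ? ? ? ? o1 o2 Hit Hk | | |]; subst.
  destruct (evalIt_commute Hit Hm) as [p1 [p2 [Hq [Hit' Hperm]]]].
  exists ((o2 ++ p2) ++ p1); split.
  - apply es_query; [| apply es_iter]; assumption.
  - rewrite Hperm, app_assoc; reflexivity.
Qed.

Lemma evalS_iter_end F P r I k o :
  no_match P I -> evalS F (KIter P r I :: k) o -> evalS F k o.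
Proof.
  intros Hn He; inversion He as [| | ? ? ? ? o1 o2 Hit Hk | | |]; subst.
  inversion Hit; subst.
  - rewrite app_nil_r; exact Hk.
  - destruct Hn; eauto.
Qed.

Lemma evalS_ex_match F P c I sg I' k o :
  matches P I sg I' -> evalS F (KEx P c I :: k) o ->
  evalS F (KC (substC sg c) :: KExW P c I' :: k) o.
Proof.
  intros Hm He; inversion He as [| | | | ? ? ? b ? ? Hex Hk |]; subst.
  destruct (evalEx_commute Hex Hm) as [[Hc ->] | [Hc Hex']].
  - apply es_cond with true; [| apply ek_exw_true]; assumption.
  - apply es_cond with false; [| apply ek_exw_false, es_ex with b]; assumption.
Qed.

Lemma evalS_ex_none F P c I k o :
  no_match P I -> evalS F (KEx P c I :: k) o -> evalS F (KVal false :: k) o.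
Proof.
  intros Hn He; inversion He as [| | | | ? ? ? b ? ? Hex Hk |]; subst.
  inversion Hex; subst; [apply es_val; exact Hk | destruct Hn; eauto ..].
Qed.

Ltac invert_frame_eval :=
  match goal with
  | H : evalQ _ QEmpty _ |- _ => inversion H; clear H
  | H : evalQ _ (QFact _) _ |- _ => inversion H; clear H
  | H : evalQ _ (QUnion _ _) _ |- _ => inversion H; clear H
  | H : evalQ _ (QIf _ _) _ |- _ => inversion H; clear H
  | H : evalQ _ (QFrom _ _) _ |- _ => inversion H; clear H
  | H : evalC _ CFalse _ |- _ => inversion H; clear H
  | H : evalC _ (CBool _) _ |- _ => inversion H; clear H
  | H : evalC _ (CNot _) _ |- _ => inversion H; clear H
  | H : evalC _ (COr _ _) _ |- _ => inversion H; clear H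
  | H : evalC _ (CEx _ _) _ |- _ => inversion H; clear H
  | H : evalK _ _ (_ :: _) _ |- _ => inversion H; clear H
  end; subst.

Lemma step_denotes s s' z : step s s' -> denotes s z -> denotes s' z.
Proof.
  intros Hstep; destruct Hstep; simpl; intros [o [He Hp]].
  all: try match goal with
    | Hm : matches _ _ _ _, He : evalS _ (KIter _ _ _ :: _) _ |- _ =>
        destruct (evalS_iter_match Hm He) as [o' [He' Ho']];
        exists o'; split; [exact He' | rewrite Hp, Ho'; reflexivity]
    | Hn : ~ _, He : evalS _ (KIter _ _ _ :: _) _ |- _ =>
        exists o; split; [exact (evalS_iter_end Hn He) | exact Hp]
    | Hm : matches _ _ _ _, He : evalS _ (KEx _ _ _ :: _) _ |- _ =>
        exists o; split; [exact (evalS_ex_match Hm He) | exact Hp]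
    | Hn : ~ _, He : evalS _ (KEx _ _ _ :: _) _ |- _ =>
        exists o; split; [exact (evalS_ex_none Hn He) | exact Hp]
    end.
  (* The remaining steps only move work between a frame and its derivation. *)
  all: inversion He; subst; clear He; try invert_frame_eval; try contradiction.
  all: try (eexists; split; [solve [eauto using evalS, evalK] |]);
       rewrite <- ?app_assoc in *; simpl in *; rewrite ?app_nil_r in *; exact Hp.
Qed.

Lemma steps_denotes s s' z : steps s s' -> denotes s z -> denotes s' z.
Proof. induction 1; eauto using step_denotes. Qed.

Lemma denotes_reaches_answer s z : denotes s z -> exists a, steps s (Ans a).
Proof.
  destruct s as [F a k | a]; simpl.
  - intros [o [He _]]; exists (o ++ a); exact (proj1 (evalS_steps F) k o He a).
  - intros _; exists a; apply rt_refl.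
Qed.

Lemma denotes_answers_perm s z a1 a2 :
  denotes s z -> steps s (Ans a1) -> steps s (Ans a2) -> Permutation a1 a2.
Proof.
  intros Hz H1 H2.
  apply (steps_denotes H1) in Hz as Hz1; apply (steps_denotes H2) in Hz as Hz2; simpl in *.
  rewrite <- Hz1; exact Hz2.
Qed.

Lemma denotes_confluent s z : denotes s z -> confluent_from s.
Proof.
  intros Hz u v Hu Hv.
  destruct (denotes_reaches_answer (steps_denotes Hu Hz)) as [a1 H1].
  destruct (denotes_reaches_answer (steps_denotes Hv Hz)) as [a2 H2].
  exists (Ans a1), (Ans a2); split; [exact H1 | split; [exact H2 |]].
  constructor; apply (denotes_answers_perm Hz);
    [exact (rt_trans _ _ _ _ _ Hu H1) | exact (rt_trans _ _ _ _ _ Hv H2)].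
Qed.

Lemma Ans_normal_form (a : db) : normal_form (Ans a).
Proof. intros [t H]; inversion H. Qed.

Lemma denotes_unique_answer s z : denotes s z ->
  exists a, steps_nf s (Ans a) /\ forall a', steps_nf s (Ans a') -> Permutation a a'.
Proof.
  intros Hz; destruct (denotes_reaches_answer Hz) as [a Ha].
  exists a; split; [split; [exact Ha | apply Ans_normal_form] |].
  intros a' [Ha' _]; exact (denotes_answers_perm Hz Ha Ha').
Qed.

Lemma denotes_Init Q F : det_query Q -> ground_db F -> exists z, denotes (Init Q F) z.
Proof.
  intros HQ HF; destruct (evalQ_total HF HQ) as [o Ho].
  exists o, o; split; [exact (es_query Ho (es_nil F)) | rewrite app_nil_r; reflexivity].
Qed.

End QueryEvaluation.

Theorem theorem4 (S : FactSetting) (Q : @query S) :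
  in_Lquery Q -> deterministic Q ->
  (forall F : @db S, ground_db F -> confluent_from (Init Q F)) /\
  (forall F : @db S, ground_db F ->
     exists F' : @db S, steps_nf (Init Q F) (Ans F') /\
       forall F'' : @db S, steps_nf (Init Q F) (Ans F'') -> Permutation F' F'').
Proof.
  intros HL HD.
  assert (HQ : det_query Q) by exact (proj1 det_of_deterministic Q HL HD).
  split; intros F HF; destruct (denotes_Init HQ HF) as [z Hz].
  - exact (denotes_confluent Hz).
  - exact (denotes_unique_answer Hz).
Qed.
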